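(* Let $s\ge3$ and $k\ge1$ be integers and let $T$ be a tree with every vertex of degree at most $s$ and with $v(T)\ge k+1$. Then $T$ has a branch $B$ such that $v(B)\le (s-1)k+1$ and $\tau_k(B)=1$.
   Context: All graphs are finite and simple; $v(\cdot)$ is the number of vertices. A branch of a tree $T$ is a subtree $B$ of $T$ such that either $B=T$ or $T-V(B)$ is also a (nonempty) tree. For $k\ge1$, $\tau_k(G)$ denotes the maximum number of pairwise vertex-disjoint subgraphs of $G$ each of which is a tree with exactly $k$ edges. *)

From mathcomp Require Import all_boot.
From Stdlib Require Import ClassicalDescription.
Set Implicit Arguments. Unset Strict Implicit. Unset Printing Implicit Defensive.

Section Graphs.
Variable T : finType.

(* A (simple) graph on the finite type T is given by a vertex set V : {set T}
   and an adjacency relation E (symmetric, irreflexive, endpoints in V). *)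

Definition induced (E : rel T) (W : {set T}) : rel T :=
  [rel x y | [&& E x y, x \in W & y \in W]].

Definition subgraph (W : {set T}) (F : rel T) (V : {set T}) (E : rel T) : Prop :=
  W \subset V /\ symmetric F /\
  (forall x y, F x y -> [&& E x y, x \in W & y \in W]).

Definition connected_on (W : {set T}) (F : rel T) : Prop :=
  forall x y, x \in W -> y \in W -> connect (induced F W) x y.

Definition acyclic (W : {set T}) (F : rel T) : Prop :=
  ~ exists c : seq T, [/\ uniq c, 2 < size c, all (fun x => x \in W) c
                        & cycle (induced F W) c].

Definition is_tree (W : {set T}) (F : rel T) : Prop :=
  W != set0 /\ connected_on W F /\ acyclic W F.

Definition nedges (W : {set T}) (F : rel T) : nat :=
  #|[set [set x; y] | x in W, y in W & F x y]|.

Definition tree_packing (k : nat) (V : {set T}) (E : rel T) (m : nat) : Prop :=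
  exists P : 'I_m -> ({set T} * rel T),
    (forall i, [/\ subgraph (P i).1 (P i).2 V E, is_tree (P i).1 (P i).2
                 & nedges (P i).1 (P i).2 = k]) /\
    (forall i j, i != j -> [disjoint (P i).1 & (P j).1]).

Definition propb (P : Prop) : bool :=
  if excluded_middle_informative P then true else false.

(* tau_k(V, E): the maximum size of such a packing (each tree is nonempty and
   they are disjoint, so the size is at most #|V|). *)
Definition tau (k : nat) (V : {set T}) (E : rel T) : nat :=
  \max_(m < #|V|.+1 | propb (tree_packing k V E m)) m.

Definition branch (e : rel T) (S : {set T}) (F : rel T) : Prop :=
  subgraph S F [set: T] e /\ is_tree S F /\
  ((S = [set: T] /\ forall x y, F x y = e x y) \/ is_tree (~: S) (induced e (~: S))).

End Graphs.

From mathcomp Require Import all_boot zify.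
From Stdlib Require Import ClassicalDescription.
Set Implicit Arguments. Unset Strict Implicit. Unset Printing Implicit Defensive.

(* For an edge [uv] of the tree, [side u v] is the component of [T - u]
   containing [v]; it is a branch, whose complement is [side v u].  If some side
   has more than [k] vertices, take such a side [side u v] of minimal size.  The
   sides [side v w] hanging at the other neighbours [w] of [v] are strictly
   smaller, hence have at most [k] vertices, so [#|side u v| <= (s-1)k + 1].
   A [k]-edge subtree has [k+1] vertices, so it fits in no [side v w] and must
   contain [v]: two such subtrees always meet, and [tau_k = 1] since a connected
   set of [k+1] vertices spans one.  If no side is that large, the two sides of
   any edge cover [T], so [#|T| <= 2k] and [T] itself is the branch: two
   disjoint [k]-edge subtrees would need [2k+2] vertices. *)

Section Subgraphs.
Variable T : finType.
Implicit Types (W V B : {set T}) (F E : rel T).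

Lemma card_bigcup_le (I : finType) (P : {set I}) (C : I -> {set T}) k :
  {in P, forall i, #|C i| <= k} -> #|\bigcup_(i in P) C i| <= #|P| * k.
Proof.
move=> leCk; rewrite -sum_nat_const.
elim/big_ind2: _ => [|A1 n1 A2 n2 le1 le2|i /leCk //]; first by rewrite cards0.
exact: leq_trans (leq_card_setU _ _) (leq_add le1 le2).
Qed.

Lemma forward_closed_connect (R : rel T) (A : {pred T}) x y :
  (forall a b, R a b -> a \in A -> b \in A) -> x \in A -> connect R x y -> y \in A.
Proof.
move=> clA + /connectP[p Rp ->]; elim: p x Rp => //= z p IHp x /andP[Rxz Rp] xA.
exact: IHp Rp (clA _ _ Rxz xA).
Qed.

Lemma connect_induced_mem F W a b : connect (induced F W) a b -> a != b -> b \in W.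
Proof.
move=> Cab nab; suff: b \in a |: W by rewrite in_setU1 eq_sym (negbTE nab).
apply: forward_closed_connect Cab; last exact: setU11.
by move=> x y /and3P[_ _ yW] _; rewrite setU1r.
Qed.

Lemma induced_sym F W : symmetric F -> symmetric (induced F W).
Proof. by move=> sF x y; rewrite /induced /= sF [(x \in W) && _]andbC. Qed.

Lemma induced_irr F W : irreflexive F -> irreflexive (induced F W).
Proof. by move=> irrF x; rewrite /induced /= irrF. Qed.

Lemma induced_id F W : induced (induced F W) W =2 induced F W.
Proof.
by move=> x y; rewrite /induced /=; case: (F x y) (x \in W) (y \in W) => [] [] [].
Qed.

Lemma path_induced_all F W a p : path (induced F W) a p -> all [in W] p.
Proof. by elim: p a => //= b p IHp a /andP[/and3P[_ _ ->] /IHp]. Qed.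

Lemma subgraph_induced F W V : W \subset V -> symmetric F -> subgraph W (induced F W) V F.
Proof.
by move=> sWV sF; split; last split; [|exact: induced_sym|move=> x y /and3P[-> -> ->]].
Qed.

Lemma acyclic_sub W V F E : W \subset V ->
  (forall x y, F x y -> x \in W -> y \in W -> E x y) -> acyclic V E -> acyclic W F.
Proof.
move=> sWV FE acE [c [uc c3 cW Fc]]; apply: acE; exists c; split => //.
  by apply/allP => x /(allP cW) /(subsetP sWV).
apply: sub_cycle Fc => x y /and3P[Fxy xW yW].
by rewrite /induced /= FE // (subsetP sWV _ xW) (subsetP sWV _ yW).
Qed.

Lemma acyclic_induced F W V : W \subset V -> acyclic V F -> acyclic W (induced F W).
Proof. by move=> sWV; apply: acyclic_sub sWV _ => x y /and3P[]. Qed.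

(* A maximal simple path cannot be extended at its head [x0], and a neighbour of
   [x0] further along the path would close a cycle: so [x0] is a leaf. *)
Lemma exists_leaf_path W F : symmetric F -> irreflexive F -> acyclic W F ->
  forall x0 p, uniq (x0 :: p) -> all [in W] (x0 :: p) -> path (induced F W) x0 p ->
  exists x0 x1, x0 \in W /\ forall y, y \in W -> F x0 y -> y = x1.
Proof.
move=> sF irrF acF x0 p; have [n] := ubnP (#|W| - size p).
elim: n x0 p => // n IHn x0 p ltWn up pW Fp; have x0W : x0 \in W by case/andP: pW.
case: (pickP [pred y | [&& y \in W, F x0 y & y \notin x0 :: p]]) => [y|noext].
  case/and3P=> yW Fx0y yp.
  have up' : uniq (y :: x0 :: p) by rewrite /= yp.
  have pW' : all [in W] (y :: x0 :: p) by rewrite /= yW.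
  apply: (IHn y (x0 :: p)) => //=; last by rewrite /induced /= sF Fx0y yW x0W.
  have : size (y :: x0 :: p) <= #|W|.
    by rewrite cardE; apply: uniq_leq_size up' _ => z /(allP pW'); rewrite mem_enum.
  by move: ltWn => /=; lia.
exists x0, (head x0 p); split => // y yW Fx0y.
have : y \in x0 :: p by have := noext y; rewrite /= yW Fx0y /= => /negbFE.
rewrite in_cons => /orP[/eqP yx0|yp]; first by move: Fx0y; rewrite yx0 irrF.
move: up pW Fp; case/splitPr: yp => p1 p2; case: p1 => [//|z1 p1] up pW Fp.
exfalso; apply: acF; exists (x0 :: rcons (z1 :: p1) y); split.
- by move: up; rewrite -cat_rcons -cat_cons cat_uniq => /andP[].
- by rewrite /= size_rcons.
- by move: pW; rewrite -cat_rcons -cat_cons all_cat => /andP[].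
- move: Fp; rewrite -cat_rcons cat_path => /andP[Fp _].
  by rewrite /cycle rcons_path Fp /= last_rcons /induced /= sF Fx0y yW x0W.
Qed.

Lemma exists_leaf W F : symmetric F -> irreflexive F -> acyclic W F -> W != set0 ->
  exists x0 x1, x0 \in W /\ forall y, y \in W -> F x0 y -> y = x1.
Proof.
move=> sF irrF acF /set0Pn[x xW].
by apply: (exists_leaf_path sF irrF acF (x0 := x) (p := [::])); rewrite /= ?xW.
Qed.

Definition edge_set W F : {set {set T}} := [set [set x; y] | x in W, y in W & F x y].

Lemma nedgesE W F : nedges W F = #|edge_set W F|.
Proof. by []. Qed.

Lemma edge_setP W F xy :
  reflect (exists x y, [/\ x \in W, y \in W, F x y & xy = [set x; y]]) (xy \in edge_set W F).
Proof.
apply: (iffP imset2P) => [[x y xW]|[x [y [xW yW Fxy ->]]]].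
  by rewrite inE => /andP[yW Fxy] ->; exists x, y.
by exists x y; rewrite // inE yW.
Qed.

Lemma mem_edge_set W F x y : x \in W -> y \in W -> F x y -> [set x; y] \in edge_set W F.
Proof. by move=> xW yW Fxy; apply/edge_setP; exists x, y. Qed.

Lemma nedges_set1 F x : irreflexive F -> nedges [set x] F = 0.
Proof.
move=> irrF; apply/eqP; rewrite nedgesE cards_eq0; apply/eqP/setP => xy.
rewrite inE; apply/negbTE/edge_setP => -[a [b [/set1P-> /set1P-> Fxx _]]].
by rewrite irrF in Fxx.
Qed.

Lemma nedges_leaf W F x0 x1 : symmetric F -> x0 \in W ->
  (forall y, y \in W -> F x0 y -> y = x1) -> nedges W F <= (nedges (W :\ x0) F).+1.
Proof.
move=> sF x0W leaf; rewrite !nedgesE.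
apply: leq_trans (_ : _ <= #|[set x0; x1] |: edge_set (W :\ x0) F|) _; last first.
  by rewrite cardsU1 addnC -addn1 leq_add2l leq_b1.
apply: subset_leq_card; apply/subsetP => _ /edge_setP[x [y [xW yW Fxy ->]]].
have [xx0|nx] := eqVneq x x0; first by rewrite xx0 (leaf y) -?xx0 ?setU11.
have [yx0|ny] := eqVneq y x0.
  by rewrite yx0 (leaf x) 1?setUC ?setU11 // sF -yx0.
by apply/setU1P; right; apply: mem_edge_set; rewrite // !inE ?nx ?ny.
Qed.

Lemma nedges_lt_card W F : symmetric F -> irreflexive F -> acyclic W F -> W != set0 ->
  nedges W F < #|W|.
Proof.
move=> sF irrF; have [n] := ubnP #|W|; elim: n W => // n IHn W ltWn acF W0.
have [x0 [x1 [x0W leaf]]] := exists_leaf sF irrF acF W0.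
have cardW : #|W| = #|W :\ x0|.+1 by rewrite (cardsD1 x0 W) x0W.
have [/eqP|W1] := eqVneq (W :\ x0) set0.
  rewrite setD_eq0 => sWx0; suff -> : W = [set x0] by rewrite nedges_set1 // cards1.
  by apply/eqP; rewrite eqEsubset sWx0 sub1set x0W.
apply: leq_ltn_trans (nedges_leaf sF x0W leaf) _; rewrite cardW ltnS.
apply: IHn W1; first by rewrite -ltnS -cardW.
by apply: acyclic_sub acF; [apply: subD1set | move=> x y].
Qed.

Lemma exists_edge_out B W F : connected_on B F -> W \subset B -> W != set0 ->
  ~~ (B \subset W) -> exists z y, [/\ z \in W, y \in B, y \notin W & F z y].
Proof.
move=> cB sWB /set0Pn[x xW] /subsetPn[y yB yW].
case: (pickP [pred p : T * T | [&& p.1 \in W, p.2 \in B, p.2 \notin W & F p.1 p.2]]).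
  by move=> [z y'] /and4P[*]; exists z, y'.
move=> noedge; suff : y \in W by rewrite (negbTE yW).
apply: forward_closed_connect xW (cB _ _ (subsetP sWB _ xW) yB).
move=> a b /and3P[Fab _ bB] aW; apply: contraT => bW.
by have := noedge (a, b); rewrite /= aW bB bW Fab.
Qed.

Lemma connected_setU1 W F z y : symmetric F -> connected_on W F -> z \in W -> F z y ->
  connected_on (y |: W) F.
Proof.
move=> sF cW zW Fzy.
have symC : connect_sym (induced F (y |: W)) by apply/sym_connect_sym/induced_sym.
have liftW a b : a \in W -> b \in W -> connect (induced F (y |: W)) a b.
  move=> aW bW; apply: connect_sub (cW a b aW bW) => c d /and3P[Fcd cW' dW'].
  by apply: connect1; rewrite /induced /= Fcd !setU1r.
have Cy a : a \in W -> connect (induced F (y |: W)) y a.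
  move=> aW; apply: connect_trans (liftW z a zW aW); apply: connect1.
  by rewrite /induced /= sF Fzy setU11 setU1r.
move=> a b /setU1P[->|aW] /setU1P[->|bW].
- exact: connect0.
- exact: Cy.
- by rewrite symC Cy.
- exact: liftW.
Qed.

Lemma nedges_setU1 W F z y : z \in W -> y \notin W -> F z y ->
  (nedges W F).+1 <= nedges (y |: W) F.
Proof.
move=> zW yW Fzy; rewrite !nedgesE.
have zy_new : [set z; y] \notin edge_set W F.
  apply/edge_setP => -[a [b [aW bW _ zyab]]].
  have : y \in [set a; b] by rewrite -zyab !inE eqxx orbT.
  by rewrite !inE => /orP[]/eqP yab; rewrite yab ?aW ?bW in yW.
have := cardsU1 [set z; y] (edge_set W F); rewrite zy_new add1n => <-.
apply: subset_leq_card.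
rewrite subUset sub1set mem_edge_set ?setU11 ?setU1r //=.
by apply/subsetP => _ /edge_setP[a [b [aW bW Fab ->]]]; rewrite mem_edge_set ?setU1r.
Qed.

Lemma exists_connected_subset B F j : symmetric F -> connected_on B F ->
  0 < j <= #|B| ->
  exists W, [/\ W \subset B, #|W| = j, connected_on W F & j.-1 <= nedges W F].
Proof.
move=> sF cB; elim: j => // -[_ /andP[_ B0] | j IHj /andP[_ ltjB]].
  have /card_gt0P[x xB] := B0; exists [set x].
  by rewrite sub1set cards1 xB; split=> // a b /set1P-> /set1P->.
have [W [sWB cardW cW eW]] := IHj (ltnW ltjB).
have W0 : W != set0 by rewrite -card_gt0 cardW.
have BW : ~~ (B \subset W).
  by apply: contraTN ltjB => /subset_leq_card; rewrite cardW -ltnNge.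
have [z [y [zW yB yW Fzy]]] := exists_edge_out cB sWB W0 BW.
exists (y |: W); split.
- by rewrite subUset sub1set yB sWB.
- by rewrite cardsU1 yW cardW.
- exact: connected_setU1 cW zW Fzy.
- exact: leq_trans (nedges_setU1 zW yW Fzy).
Qed.

Definition ksubtree k B F W F' := [/\ subgraph W F' B F, is_tree W F' & nedges W F' = k].

Lemma ksubtree_card k B F W F' : irreflexive F -> ksubtree k B F W F' -> k < #|W|.
Proof.
move=> irrF [[_ [sF' F'F]] [W0 [_ acF']] <-]; apply: nedges_lt_card => // x.
by apply/negbTE/negP => /F'F/and3P[]; rewrite irrF.
Qed.

Lemma nedges_induced W F : nedges W (induced F W) = nedges W F.
Proof.
apply: eq_card => xy; apply/edge_setP/edge_setP => -[x [y [xW yW Fxy ->]]];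
  by exists x, y; split => //; move: Fxy; rewrite /induced /= ?xW ?yW ?andbT // => /and3P[].
Qed.

Lemma exists_ksubtree k B F : symmetric F -> irreflexive F -> connected_on B F ->
  acyclic B F -> k < #|B| -> exists W, ksubtree k B F W (induced F W).
Proof.
move=> sF irrF cB acB ltkB.
have [W [sWB cardW cW eW]] := exists_connected_subset sF cB (j := k.+1) ltkB.
have W0 : W != set0 by rewrite -card_gt0 cardW.
have acW := acyclic_induced sWB acB.
exists W; split.
- exact: subgraph_induced.
- split=> //; split=> // x y xW yW; rewrite (eq_connect (@induced_id F W)); exact: cW.
- have := nedges_lt_card (induced_sym W sF) (induced_irr W irrF) acW W0.
  by rewrite cardW ltnS nedges_induced => le_k; apply/eqP; rewrite eqn_leq le_k; exact: eW.
Qed.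

Lemma tau_eq1 k B F : (exists W F', ksubtree k B F W F') ->
  (forall W0 F0 W1 F1,
     ksubtree k B F W0 F0 -> ksubtree k B F W1 F1 -> ~~ [disjoint W0 & W1]) ->
  tau k B F = 1.
Proof.
move=> [W [F' tW]] meet; have [[sWB _] [W0 _] _] := tW.
apply/eqP; rewrite eqn_leq; apply/andP; split.
  apply/bigmax_leqP => m; rewrite /propb.
  case: excluded_middle_informative => // -[P [tP dP]] _.
  rewrite leqNgt; apply/negP => m1; have m0 := ltnW m1.
  by have := meet _ _ _ _ (tP (Ordinal m0)) (tP (Ordinal m1)); rewrite dP.
have B1 : 1 < #|B|.+1 by rewrite ltnS card_gt0; apply: subset_neq0 sWB W0.
have := @leq_bigmax_cond _ (fun m : 'I_#|B|.+1 => propb (tree_packing k B F m))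
  (fun m => nat_of_ord m) (Ordinal B1); rewrite /propb.
case: excluded_middle_informative => [_ /(_ isT) //|[]].
by exists (fun=> (W, F')); split=> [i|i j]; last rewrite !ord1 eqxx.
Qed.

End Subgraphs.

Section TreeSides.
Variables (T : finType) (e : rel T).
Hypotheses (se : symmetric e) (ie : irreflexive e).
Hypotheses (conT : connected_on [set: T] e) (acT : acyclic [set: T] e).

Lemma edge_neq x y : e x y -> x != y.
Proof. by apply: contraTneq => ->; rewrite ie. Qed.

Fact side_key : unit. Proof. by []. Qed.
Definition side := locked_with side_key
  (fun u v => [set x | connect (induced e (~: [set u])) v x]).

Lemma in_side u v x : (x \in side u v) = connect (induced e (~: [set u])) v x.
Proof. by rewrite /side locked_withE inE. Qed.

Lemma side_root u v : v \in side u v.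
Proof. by rewrite in_side connect0. Qed.

Lemma side_neq u v x : u != v -> x \in side u v -> x != u.
Proof.
move=> nuv; rewrite in_side => Cvx; have [<-|nvx] := eqVneq v x; first by rewrite eq_sym.
by have := connect_induced_mem Cvx nvx; rewrite !inE.
Qed.

Lemma side_step u v x y : u != v -> x \in side u v -> e x y -> y != u -> y \in side u v.
Proof.
move=> nuv xS exy nyu; have nxu := side_neq nuv xS.
move: xS; rewrite !in_side => Cvx; apply: connect_trans Cvx (connect1 _).
by rewrite /induced /= exy !inE nxu nyu.
Qed.

(* A path from [a] to another neighbour [w] of [c] avoiding [c] closes a cycle
   through [c]. *)
Lemma side_nbr c a w : e c a -> e c w -> w != a -> w \notin side c a.
Proof.
move=> eca ecw nwa; rewrite in_side; apply/negP => /connectP[p0 Cp0 wl].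
case: (shortenP Cp0) wl => p Cp up _ wl; apply: acT.
have pC : all [in ~: [set c]] p.
  by apply/allP => x /(allP (path_induced_all Cp)).
exists (c :: a :: p); split.
- rewrite /= in up *; rewrite up andbT inE negb_or (edge_neq eca) /=.
  by apply/negP => /(allP pC); rewrite !inE eqxx.
- by case: p {Cp up pC} wl => [|b p] //= wa; rewrite -wa eqxx in nwa.
- by apply/allP => x; rewrite inE.
- rewrite /cycle /= rcons_path; apply/and3P; split.
  + by rewrite /induced /= eca !inE.
  + by apply: sub_path Cp => x y /and3P[exy _ _]; rewrite /induced /= exy !inE.
  + by rewrite -wl /induced /= se ecw !inE.
Qed.

Lemma side_connect u v x : u != v -> x \in side u v -> connect (induced e (side u v)) v x.
Proof.
move=> nuv; rewrite in_side => Cvx.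
suff : x \in [set y in side u v | connect (induced e (side u v)) v y] by case/setIdP.
apply: forward_closed_connect Cvx; last by rewrite inE side_root connect0.
move=> a b Rab /setIdP[aS Cva]; have bS : b \in side u v.
  by move: aS; rewrite !in_side => Cua; apply: connect_trans Cua (connect1 Rab).
rewrite inE bS; apply: connect_trans Cva (connect1 _).
by case/and3P: Rab => eab _ _; rewrite /induced /= eab aS bS.
Qed.

Lemma side_connected u v : u != v -> connected_on (side u v) (induced e (side u v)).
Proof.
move=> nuv x y xS yS; rewrite (eq_connect (@induced_id _ e _)).
have symS := sym_connect_sym (induced_sym (side u v) se).
by apply: connect_trans (side_connect nuv yS); rewrite symS; apply: side_connect.
Qed.

Lemma side_tree u v : u != v -> is_tree (side u v) (induced e (side u v)).
Proof.
move=> nuv; split; first by apply/set0Pn; exists v; apply: side_root.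
by split; [apply: side_connected | apply: acyclic_induced acT; apply: subsetT].
Qed.

Lemma side_disjoint u v x : e u v -> x \in side u v -> x \notin side v u.
Proof.
move=> euv xS; have nuv := edge_neq euv; have nvu : v != u by rewrite eq_sym.
have evu : e v u by rewrite se.
suff : x \in [set y | y \notin side v u] by rewrite inE.
apply: forward_closed_connect (side_connect nuv xS); last first.
  by rewrite inE; apply/negP => /(side_neq nvu); rewrite eqxx.
move=> a b /and3P[eab aS bS]; rewrite !inE => naS; apply/negP => bS'.
have [av|nav] := eqVneq a v.
  rewrite av in eab; have := side_nbr evu eab (side_neq nuv bS).
  by rewrite bS'.
by move: naS; rewrite (side_step nvu bS' _ nav) // se.
Qed.

Lemma side_cover u v x : e u v -> (x \in side u v) || (x \in side v u).
Proof.
move=> euv; have nuv := edge_neq euv; have nvu : v != u by rewrite eq_sym.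
suff : x \in side u v :|: side v u by rewrite inE.
apply: forward_closed_connect (conT (in_setT u) (in_setT x)).
  2: by rewrite inE side_root orbT.
move=> a b /and3P[eab _ _] /setUP[aS|aS'].
  by have [->|nbu] := eqVneq b u; rewrite inE ?side_root ?(side_step nuv aS eab) ?orbT.
by have [->|nbv] := eqVneq b v; rewrite inE ?side_root ?(side_step nvu aS' eab) ?orbT.
Qed.

Lemma setC_side u v : e u v -> ~: side u v = side v u.
Proof.
move=> euv; apply/setP => x; rewrite inE.
have := side_cover x euv.
by case: (boolP (x \in side u v)) => [/(side_disjoint euv)/negbTE|].
Qed.

Lemma side_proper u v w : e u v -> e v w -> w != u -> side v w \proper side u v.
Proof.
move=> euv evw nwu; have nuv := edge_neq euv; have nvw := edge_neq evw.
apply/properP; split; last first.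
  by exists v; rewrite ?side_root //; apply/negP => /(side_neq nvw); rewrite eqxx.
apply/subsetP => x; rewrite [x \in side v w]in_side => Cwx.
apply: forward_closed_connect Cwx; last exact: side_step nuv (side_root u v) evw nwu.
move=> a b /and3P[eab av bv] aS; rewrite !inE in av bv.
have [bu|nbu] := eqVneq b u; last exact: side_step nuv aS eab nbu.
have eua : e u a by rewrite se -bu.
by have := side_nbr euv eua av; rewrite aS.
Qed.

Definition children u v := [set w | e v w & w != u].

Lemma card_children u v : e u v -> #|children u v| = #|[set w | e v w]|.-1.
Proof.
move=> euv; rewrite (cardsD1 u [set w | e v w]) inE se euv /=.
by apply: eq_card => w; rewrite !inE andbC.
Qed.

Lemma side_sub_children u v :
  e u v -> side u v \subset v |: \bigcup_(w in children u v) side v w.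
Proof.
move=> euv; have nuv := edge_neq euv.
apply/subsetP => x; rewrite [x \in side u v]in_side => Cvx.
apply: forward_closed_connect Cvx; last exact: setU11.
move=> a b /and3P[eab _ bu]; rewrite !inE in bu.
case/setU1P => [av|/bigcupP[w]].
  by apply/setU1P; right; apply/bigcupP; exists b; rewrite ?side_root // inE -av eab.
rewrite inE => /andP[evw nwu] aS; have [->|nbv] := eqVneq b v; first exact: setU11.
apply/setU1P; right; apply/bigcupP; exists w; first by rewrite inE evw nwu.
exact: side_step (edge_neq evw) aS eab nbv.
Qed.

Lemma card_side_le k u v : e u v -> {in children u v, forall w, #|side v w| <= k} ->
  #|side u v| <= #|children u v| * k + 1.
Proof.
move=> euv small; apply: leq_trans (subset_leq_card (side_sub_children euv)) _.
by rewrite cardsU1 addnC leq_add ?leq_b1 ?card_bigcup_le.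
Qed.

Lemma card_sides u v : e u v -> #|side u v| + #|side v u| = #|T|.
Proof. by move=> euv; rewrite -(setC_side euv) cardsC. Qed.

Lemma ksubtree_side_root k u v W F :
  e u v -> {in children u v, forall w, #|side v w| <= k} ->
  ksubtree k (side u v) (induced e (side u v)) W F -> v \in W.
Proof.
move=> euv small tW; have [[sWS [_ FS]] [/set0Pn[x0 x0W] [cW _]] _] := tW.
apply: contraT => vW; have := subsetP (side_sub_children euv) x0 (subsetP sWS _ x0W).
case/setU1P => [x0v|/bigcupP[w wC x0w]]; first by rewrite -x0v x0W in vW.
have evw : e v w by move: wC; rewrite inE => /andP[].
have sWw : W \subset side v w.
  apply/subsetP => y yW; apply: forward_closed_connect (cW _ _ x0W yW) => // a b.
  move=> /and3P[Fab aW bW] aw; have /and3P[/and3P[eab _ _] _ _] := FS _ _ Fab.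
  by apply: side_step (edge_neq evw) aw eab _; apply: contraNneq vW => <-.
have := ksubtree_card (induced_irr _ ie) tW.
by rewrite ltnNge (leq_trans (subset_leq_card sWw)) ?small.
Qed.

Lemma branch_side u v : e u v -> branch e (side u v) (induced e (side u v)).
Proof.
move=> euv; split; first exact: subgraph_induced (subsetT _) se.
split; first exact: side_tree (edge_neq euv).
by right; rewrite setC_side //; apply: side_tree; rewrite eq_sym edge_neq.
Qed.

Lemma tau_side k u v : e u v -> k < #|side u v| ->
  {in children u v, forall w, #|side v w| <= k} ->
  tau k (side u v) (induced e (side u v)) = 1.
Proof.
move=> euv ltk small; apply: tau_eq1.
  have [W tW] := exists_ksubtree (induced_sym _ se) (induced_irr _ ie)
    (side_connected (edge_neq euv)) (acyclic_induced (subsetT _) acT) ltk.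
  by exists W, (induced (induced e (side u v)) W).
move=> W0 F0 W1 F1 /(ksubtree_side_root euv small) vW0 /(ksubtree_side_root euv small) vW1.
by apply/negP => /disjointFr/(_ vW0); rewrite vW1.
Qed.

Lemma exists_minimal_heavy_edge k u0 v0 : e u0 v0 -> k < #|side u0 v0| ->
  exists u v, [/\ e u v, k < #|side u v| & {in children u v, forall w, #|side v w| <= k}].
Proof.
move=> euv0 ltk0; pose heavy p := e p.1 p.2 && (k < #|side p.1 p.2|).
have heavy0 : heavy (u0, v0) by rewrite /heavy euv0.
have [[u v] /andP[/= euv ltk] minuv] := arg_minnP (fun p => #|side p.1 p.2|) heavy0.
exists u, v; split=> // w; rewrite inE => /andP[evw nwu].
rewrite leqNgt; apply/negP => ltkw.
have := minuv (v, w); rewrite /heavy /= evw ltkw => /(_ isT).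
by rewrite leqNgt (proper_card (side_proper euv evw nwu)).
Qed.

Lemma exists_edge : 1 < #|T| -> exists x y, e x y.
Proof.
case/card_gt1P => x [y [_ _ nxy]].
have /connectP[[|z p] /= Cp yx] := conT (in_setT x) (in_setT y).
  by rewrite yx eqxx in nxy.
by case/andP: Cp => /and3P[exz _ _] _; exists x, z.
Qed.

Lemma branch_setT : is_tree [set: T] e -> branch e [set: T] e.
Proof.
move=> treeT; split; last by split; last left.
by split; [apply: subsetT | split => // x y ->; rewrite !in_setT].
Qed.

Lemma tau_setT k : k < #|T| <= k + k -> tau k [set: T] e = 1.
Proof.
case/andP=> ltkT leT; apply: tau_eq1.
  have ltkB : k < #|[set: T]| by rewrite cardsT.
  by have [W tW] := exists_ksubtree se ie conT acT ltkB; exists W, (induced e W).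
move=> W0 F0 W1 F1 /(ksubtree_card ie) lt0 /(ksubtree_card ie) lt1; apply/negP => dW.
have := max_card (mem (W0 :|: W1)); rewrite cardsU (disjoint_setI0 dW) cards0 subn0; lia.
Qed.

End TreeSides.

Theorem lemma7p1 (T : finType) (e : rel T) (s k : nat) :
  3 <= s -> 1 <= k ->
  symmetric e -> irreflexive e -> is_tree [set: T] e ->
  (forall v : T, #|[set u | e v u]| <= s) ->
  k.+1 <= #|T| ->
  exists (S : {set T}) (F : rel T),
    [/\ branch e S F, #|S| <= (s - 1) * k + 1 & tau k S F = 1].
Proof.
move=> s3 k1 se ie treeT deg ltkT; have [_ [conT acT]] := treeT.
case: (boolP [exists u, exists v, e u v && (k < #|side e u v|)]) => [|light].
  case/existsP=> u0 /existsP[v0 /andP[euv0 ltk0]].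
  have [u [v [euv ltk small]]] := exists_minimal_heavy_edge se ie acT euv0 ltk0.
  exists (side e u v), (induced e (side e u v)); split.
  - exact: branch_side.
  - apply: leq_trans (card_side_le ie euv small) _; rewrite leq_add2r leq_mul //.
    by rewrite card_children // -subn1 leq_sub2r.
  - exact: tau_side.
have light_side u v : e u v -> #|side e u v| <= k.
  move=> euv; rewrite leqNgt; apply: contra light => ltk.
  by apply/existsP; exists u; apply/existsP; exists v; rewrite euv.
have [u [v euv]] := exists_edge conT (leq_ltn_trans k1 ltkT).
have leT : #|T| <= k + k.
  by rewrite -(card_sides se ie conT acT euv) leq_add ?light_side // se.
exists [set: T], e; split.
- exact: branch_setT.
- have : 2 * k <= (s - 1) * k by rewrite leq_mul2r (leq_sub2r 1 s3) orbT.
  by rewrite cardsT; lia.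
- by apply: tau_setT; rewrite ?ltkT.
Qed.
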